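(* Let $n\ge2$ and let $\mathcal{S}$ be a quadric hypersurface in $\mathbb{R}^n$ containing at least two points but no line, with an affine change of variables $\mathbf{s}=T\mathbf{s}'+\mathbf{v}$ bringing it into one of the normal forms (1)–(3), and with the associated parameterisation $\boldsymbol{\sigma}(\mathbf{t})=T\boldsymbol{\sigma}'(\mathbf{t})+\mathbf{v}$, $\mathbf{t}\in D$, described in the context. Let $O\subseteq D\setminus\sigma_1^{-1}(0)$ be a nonempty open set. Then there is $\mathbf{t}\in O$ such that \[\det\left(\frac{\partial\overline{\boldsymbol{\sigma}}'(\mathbf{t})}{\partial\mathbf{t}}\right)\neq0,\] where $\overline{\boldsymbol{\sigma}}'=(\sigma_1',\dots,\sigma_{n-1}')^T$.
   Context: Let $\mathcal{S}=\{\mathbf{s}\in\mathbb{R}^n:\tfrac12\mathbf{s}^TA\mathbf{s}+\mathbf{b}^T\mathbf{s}+c=0\}$ with $A$ a nonzero real symmetric matrix, and assume $\mathcal{S}$ contains at least two points but no line. Let $T$ be an invertible real $n\times n$ matrix and $\mathbf{v}\in\mathbb{R}^n$ such that under $\mathbf{s}=T\mathbf{s}'+\mathbf{v}$ the equation of $\mathcal{S}$ becomes one of: (1) (when $\operatorname{rk}A=n-1$) $\sum_{j=1}^{n-1}\epsilon_js_j'^2=s_n'$ with $\epsilon_j\in\{-1,1\}$; (2) (when $\operatorname{rk}A=n$ and $A$ has eigenvalues of both signs) $s_1's_n'+\sum_{j=2}^{n-1}\epsilon_js_j'^2=c'$ with $c'\neq0$, $\epsilon_j\in\{-1,1\}$;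 (3) (when $\operatorname{rk}A=n$ and all eigenvalues of $A$ have the same sign) $\sum_{j=1}^ns_j'^2=1$. The parameterisation $\boldsymbol{\sigma}'=(\sigma_1',\dots,\sigma_n')^T$ of the normal form is: in case (1), $\sigma_j'(\mathbf{t})=t_j$ for $j\le n-1$, $\sigma_n'(\mathbf{t})=\sum_{j=1}^{n-1}\epsilon_jt_j^2$, $D=\mathbb{R}^{n-1}$; in case (2), $\sigma_j'(\mathbf{t})=t_j$ for $j\le n-1$, $\sigma_n'(\mathbf{t})=\frac{1}{t_1}\big(c'-\sum_{j=2}^{n-1}\epsilon_jt_j^2\big)$, $D=(\mathbb{R}\setminus\{0\})\times\mathbb{R}^{n-2}$; in case (3), $\boldsymbol{\sigma}'(\mathbf{t})=\boldsymbol{\tau}(\boldsymbol{\varphi})$ with $\varphi_j=2\arctan(t_j)$, where $\boldsymbol{\tau}$ is the spherical-coordinate map $\tau_1=\cos\varphi_1$, $\tau_k=\sin\varphi_1\cdots\sin\varphi_{k-1}\cos\varphi_k$ for $2\le k\le n-1$, $\tau_n=\sin\varphi_1\cdots\sin\varphi_{n-1}$ (so each component is rational in $\mathbf{t}$ via $\cos\varphi_j=\frac{1-t_j^2}{1+t_j^2}$, $\sin\varphi_j=\frac{2t_j}{1+t_j^2}$), $D=\mathbb{R}^{n-1}$. Then $\boldsymbol{\sigma}(\mathbf{t})=T\boldsymbol{\sigma}'(\mathbf{t})+\mathbf{v}$ with components $\sigma_1,\dots,\sigma_n$, and $\sigma_1^{-1}(0)$ is the zero set of $\sigma_1$. *)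

From HB Require Import structures.
From mathcomp Require Import all_boot all_order all_algebra.
From mathcomp Require Import all_classical all_reals all_analysis.
Set Implicit Arguments. Unset Strict Implicit. Unset Printing Implicit Defensive.
Import Order.TTheory GRing.Theory Num.Theory.
Import numFieldNormedType.Exports.
Local Open Scope classical_set_scope.
Local Open Scope ring_scope.

Section QuadricDefs.
Variable R : realType.

(* 0-indexed coordinate access by a natural number (0 outside the range).
   Coordinate k here is coordinate k+1 of the paper. *)
Definition rcoord (m : nat) (t : 'rV[R]_m) (k : nat) : R :=
  if @insub _ (fun i => (i < m)%N) 'I_m k is Some j then t 0 j else 0.
Definition ccoord (m : nat) (s : 'cV[R]_m) (k : nat) : R :=
  if @insub _ (fun i => (i < m)%N) 'I_m k is Some j then s j 0 else 0.

Definition quadric (n : nat) (A : 'M[R]_n) (b : 'cV[R]_n) (c : R)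
  : set 'cV[R]_n :=
  [set s | (s^T *m A *m s) 0 0 / 2 + (b^T *m s) 0 0 + c = 0].

Definition contains_line (n : nat) (S : set 'cV[R]_n) : Prop :=
  exists (p d : 'cV[R]_n), d != 0 /\ forall l : R, S (p + l *: d).

Definition has_two_points (n : nat) (S : set 'cV[R]_n) : Prop :=
  exists (x y : 'cV[R]_n), S x /\ S y /\ x != y.

Inductive nfcase := NF1 | NF2 | NF3.

Definition case_cond (n : nat) (A : 'M[R]_n) (cs : nfcase) : Prop :=
  match cs with
  | NF1 => \rank A = n.-1
  | NF2 => \rank A = n /\
           (exists a, eigenvalue A a /\ 0 < a) /\
           (exists a, eigenvalue A a /\ a < 0)
  | NF3 => \rank A = n /\
           ((forall a, eigenvalue A a -> 0 < a) \/
            (forall a, eigenvalue A a -> a < 0))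
  end.

Definition param_cond (n : nat) (cs : nfcase) (eps : nat -> R) (c' : R) : Prop :=
  match cs with
  | NF1 => forall j, (j < n.-1)%N -> eps j = 1 \/ eps j = -1
  | NF2 => c' != 0 /\
           forall j, (1 <= j < n.-1)%N -> eps j = 1 \/ eps j = -1
  | NF3 => True
  end.

Definition nf_eq (n : nat) (cs : nfcase) (eps : nat -> R) (c' : R)
  (s' : 'cV[R]_n) : Prop :=
  match cs with
  | NF1 => \sum_(0 <= j < n.-1) eps j * ccoord s' j ^+ 2 = ccoord s' n.-1
  | NF2 => ccoord s' 0 * ccoord s' n.-1
           + \sum_(1 <= j < n.-1) eps j * ccoord s' j ^+ 2 = c'
  | NF3 => \sum_(0 <= j < n) ccoord s' j ^+ 2 = 1
  end.

Definition phi (m : nat) (t : 'rV[R]_m) (j : nat) : R := 2 * atan (rcoord t j).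

Definition sigma'_comp (n : nat) (cs : nfcase) (eps : nat -> R) (c' : R)
  (t : 'rV[R]_n.-1) (k : nat) : R :=
  match cs with
  | NF1 => if (k < n.-1)%N then rcoord t k
           else \sum_(0 <= j < n.-1) eps j * rcoord t j ^+ 2
  | NF2 => if (k < n.-1)%N then rcoord t k
           else (c' - \sum_(1 <= j < n.-1) eps j * rcoord t j ^+ 2) / rcoord t 0
  | NF3 => if (k < n.-1)%N then
             (\prod_(0 <= j < k) sin (phi t j)) * cos (phi t k)
           else \prod_(0 <= j < n.-1) sin (phi t j)
  end.

Definition sigma' (n : nat) (cs : nfcase) (eps : nat -> R) (c' : R)
  (t : 'rV[R]_n.-1) : 'cV[R]_n :=
  \col_(k < n) sigma'_comp cs eps c' t k.

Definition param_dom (n : nat) (cs : nfcase) : set 'rV[R]_n.-1 :=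
  match cs with
  | NF2 => [set t | rcoord t 0 != 0]
  | _ => setT
  end.

Definition sigma (n : nat) (T : 'M[R]_n) (v : 'cV[R]_n) (cs : nfcase)
  (eps : nat -> R) (c' : R) (t : 'rV[R]_n.-1) : 'cV[R]_n :=
  T *m sigma' cs eps c' t + v.

Definition jac_sigma'bar (n : nat) (cs : nfcase) (eps : nat -> R) (c' : R)
  (t : 'rV[R]_n.-1) : 'M[R]_n.-1 :=
  \matrix_(i < n.-1, j < n.-1)
     derive (fun u : 'rV[R]_n.-1 => sigma'_comp cs eps c' u i) t
            (delta_mx 0 j : 'rV[R]_n.-1).

End QuadricDefs.

(* In the normal forms (1) and (2) the first n-1 components of sigma' are the
   coordinates t_1, ..., t_{n-1} themselves, so the Jacobian of sigma'bar is the
   identity.  In the spherical form (3), sigma'_k depends only on t_1, ..., t_k,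
   so the Jacobian is lower triangular with diagonal entries
   sin phi_1 ... sin phi_{k-1} * (- sin phi_k) * 2 / (1 + t_k^2); as
   phi_j = 2 atan t_j lies in (-pi, pi), these are nonzero as soon as every t_j
   is nonzero, and every nonempty open set contains such a t. *)

From HB Require Import structures.
From mathcomp Require Import all_boot all_order all_algebra.
From mathcomp Require Import all_classical all_reals all_analysis.
Import Order.TTheory GRing.Theory Num.Theory.
Import numFieldNormedType.Exports.
Local Open Scope classical_set_scope.
Local Open Scope ring_scope.
Set Implicit Arguments. Unset Strict Implicit. Unset Printing Implicit Defensive.

Lemma derive_along_line (R : numFieldType) (V W : normedModType R)
    (f : V -> W) (a v : V) :
  'D_v f a = 'D_1 (fun h : R => f (h *: v + a)) 0.
Proof.
rewrite /derive; congr (lim (_ @ 0^')); apply/funext => h /=.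
by rewrite scale0r add0r addr0 [h *: 1]mulr1.
Qed.

Lemma is_derive1_comp (R : realFieldType) (f g : R -> R) (x df dg : R) :
  is_derive x 1 f df -> is_derive (f x) 1 g dg ->
  is_derive x 1 (g \o f) (dg * df).
Proof.
move=> [df_ <-] [dg_ <-].
have dgf : derivable (g \o f) x 1.
  by apply/derivable1_diffP/differentiable_comp; apply/derivable1_diffP.
by apply: DeriveDef => //; rewrite -!derive1E derive1_comp.
Qed.

Lemma derive1_affine (R : numFieldType) (c d x : R) :
  'D_1 (fun h : R => c * h + d) x = c.
Proof.
have := is_deriveD (is_deriveZ c (is_derive_id x 1)) (is_derive_cst d x 1).
by case; rewrite addr0 [c *: 1]mulr1.
Qed.

Lemma open_exists_row_neq0 (R : realType) m (O : set 'rV[R]_m) :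
  open O -> O !=set0 -> exists2 t, O t & forall j, t 0 j != 0.
Proof.
move=> oO [t0 Ot0].
have : open_nbhs t0 O by [].
rewrite open_nbhsE => -[_ /nbhs_ballP [e /= e0 t0eO]].
pose t := \row_j (if t0 0 j == 0 then e / 2 else t0 0 j).
exists t.
  apply: t0eO; split => // i j; rewrite !ord1 mxE.
  case: ifP => [/eqP ->|_]; last exact: ballxx.
  rewrite -ball_normE /ball_ /= sub0r normrN gtr0_norm ?divr_gt0 //.
  by rewrite ltr_pdivrMr // ltr_pMr // ltr1n.
move=> j; rewrite mxE; case: ifP => [_|/negbT //].
by rewrite lt0r_neq0 ?divr_gt0.
Qed.

Lemma sin_2atan_neq0 (R : realType) (a : R) : a != 0 -> sin (2 * atan a) != 0.
Proof.
move=> a0; rewrite mulr_natl sin_mulr2n mulrn_eq0 /=.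
have catan0 : cos (atan a) != 0.
  by apply/lt0r_neq0/cos_gt0_pihalf; rewrite atan_gtNpi2 atan_ltpi2.
apply: mulf_neq0 => //; apply: contra a0 => /eqP satan0.
by rewrite -[a]atanK /tan satan0 mul0r.
Qed.

Lemma is_derive_cos_2atan_shift (R : realType) (a : R) :
  is_derive (0 : R) (1 : R) (fun h : R => cos (2 * atan (h + a)))
    (- sin (2 * atan a) * (2 * (1 + a ^+ 2)^-1)).
Proof.
have dshift := @is_derive_shift R 0 1 a.
have datan := is_deriveZ 2 (is_derive1_atan (shift a 0)).
have := is_derive1_comp (is_derive1_comp dshift datan) (is_derive_cos _).
by rewrite /= add0r mulr1.
Qed.

Section JacobianOfNormalForms.
Variables (R : realType) (n : nat) (eps : nat -> R) (c' : R).

Lemma rcoordE m (t : 'rV[R]_m) (i : 'I_m) : rcoord t i = t 0 i.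
Proof. by rewrite /rcoord valK. Qed.

Lemma rcoord_line m (t : 'rV[R]_m) (j : 'I_m) (h : R) k :
  rcoord (h *: delta_mx 0 j + t) k = (k == j)%:R * h + rcoord t k.
Proof.
rewrite /rcoord; case: insubP => [i _ <-|/negbTE km].
  by rewrite !mxE eqxx mulrC.
have -> : (k == j) = false by apply: contraFF km => /eqP ->.
by rewrite mul0r add0r.
Qed.

Lemma phi_line m (t : 'rV[R]_m) (j : 'I_m) (h : R) k :
  phi (h *: delta_mx 0 j + t) k = 2 * atan ((k == j)%:R * h + rcoord t k).
Proof. by rewrite /phi rcoord_line. Qed.

Lemma phi_line_neq m (t : 'rV[R]_m) (j : 'I_m) (h : R) (k : nat) :
  k != j :> nat -> phi (h *: delta_mx 0 j + t) k = phi t k.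
Proof. by move=> /negbTE kj; rewrite phi_line kj mul0r add0r. Qed.

Lemma jac_sigma'barE cs (t : 'rV[R]_n.-1) (i j : 'I_n.-1) :
  jac_sigma'bar cs eps c' t i j =
  'D_1 (fun h : R => sigma'_comp cs eps c' (h *: delta_mx 0 j + t) i) 0.
Proof. by rewrite mxE derive_along_line. Qed.

Lemma jac_sigma'bar_graph cs (t : 'rV[R]_n.-1) :
  cs <> NF3 -> jac_sigma'bar cs eps c' t = 1%:M.
Proof.
move=> csN3; apply/matrixP => i j; rewrite jac_sigma'barE mxE.
have -> : (fun h : R => sigma'_comp cs eps c' (h *: delta_mx 0 j + t) i)
          = (fun h => (i == j)%:R * h + rcoord t i).
  by apply/funext => h; case: cs csN3 => // _; rewrite /sigma'_comp ltn_ord rcoord_line.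
by rewrite derive1_affine.
Qed.

Lemma jac_sigma'bar_sphere_trig (t : 'rV[R]_n.-1) :
  is_trig_mx (jac_sigma'bar NF3 eps c' t).
Proof.
apply/is_trig_mxP => i j ij; rewrite jac_sigma'barE.
have -> : (fun h : R => sigma'_comp NF3 eps c' (h *: delta_mx 0 j + t) i)
          = cst (sigma'_comp NF3 eps c' t i).
  apply/funext => h; rewrite /sigma'_comp ltn_ord phi_line_neq ?ltn_eqF //.
  congr (_ * _); apply: eq_big_nat => l /andP[_ li].
  by rewrite phi_line_neq // ltn_eqF // (ltn_trans li ij).
exact: derive_cst.
Qed.

Lemma jac_sigma'bar_sphere_diag (t : 'rV[R]_n.-1) (i : 'I_n.-1) :
  jac_sigma'bar NF3 eps c' t i i =
  (\prod_(0 <= l < i) sin (phi t l)) *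
    (- sin (phi t i) * (2 * (1 + rcoord t i ^+ 2)^-1)).
Proof.
pose P := \prod_(0 <= l < i) sin (phi t l).
rewrite jac_sigma'barE.
have -> : (fun h : R => sigma'_comp NF3 eps c' (h *: delta_mx 0 i + t) i)
          = P *: (fun h => cos (2 * atan (h + rcoord t i))).
  apply/funext => h; rewrite /sigma'_comp ltn_ord phi_line eqxx mul1r.
  congr (_ * _); apply: eq_big_nat => l /andP[_ li].
  by rewrite phi_line_neq // ltn_eqF.
by have [_ ->] := is_deriveZ P (is_derive_cos_2atan_shift (rcoord t i)).
Qed.

Lemma det_jac_sigma'bar_sphere_neq0 (t : 'rV[R]_n.-1) :
  (forall j, t 0 j != 0) -> \det (jac_sigma'bar NF3 eps c' t) != 0.
Proof.
move=> t_neq0; rewrite det_trig ?jac_sigma'bar_sphere_trig //.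
have sin_phi_neq0 (l : 'I_n.-1) : sin (phi t l) != 0.
  by rewrite sin_2atan_neq0 // rcoordE.
apply/prodf_neq0 => i _; rewrite jac_sigma'bar_sphere_diag.
have sq1_neq0 : 1 + rcoord t i ^+ 2 != 0.
  by rewrite paddr_eq0 ?ler01 ?sqr_ge0 // oner_eq0.
rewrite !mulf_neq0 ?oppr_eq0 ?invr_eq0 //.
rewrite prodf_seq_neq0; apply/allP => l; rewrite mem_index_iota => /andP[_ li].
exact: (sin_phi_neq0 (Ordinal (ltn_trans li (ltn_ord i)))).
Qed.

Lemma open_exists_det_jac_sigma'bar_neq0 cs (O : set 'rV[R]_n.-1) :
  open O -> O !=set0 -> exists2 t, O t & \det (jac_sigma'bar cs eps c' t) != 0.
Proof.
move=> oO O0; case: cs.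
1,2: by have [t Ot] := O0; exists t; rewrite // jac_sigma'bar_graph // det1 oner_neq0.
have [t Ot t_neq0] := open_exists_row_neq0 oO O0.
by exists t; rewrite // det_jac_sigma'bar_sphere_neq0.
Qed.

End JacobianOfNormalForms.

Theorem lemma4 (R : realType) (n : nat) (hn : (2 <= n)%N)
  (A : 'M[R]_n) (b : 'cV[R]_n) (c : R)
  (hA0 : A != 0) (hAsym : A^T = A)
  (hS2 : has_two_points (quadric A b c))
  (hSline : ~ contains_line (quadric A b c))
  (T : 'M[R]_n) (hT : T \in unitmx) (v : 'cV[R]_n)
  (cs : nfcase) (eps : nat -> R) (c' : R)
  (hcase : case_cond A cs) (hparam : param_cond n cs eps c')
  (hnf : forall s' : 'cV[R]_n,
           quadric A b c (T *m s' + v) <-> nf_eq cs eps c' s')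
  (O : set 'rV[R]_n.-1) (hOopen : open O) (hOne : O !=set0)
  (hOsub : O `<=` @param_dom R n cs `\`
                  [set t | ccoord (sigma T v cs eps c' t) 0 = 0]) :
  exists2 t, O t & \det (jac_sigma'bar cs eps c' t) != 0.
Proof. exact: open_exists_det_jac_sigma'bar_neq0. Qed.
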